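(* (a) Let $\Omega$ be a nonempty set, $k$ a positive integer and $\mathcal{A}_1,\dots,\mathcal{A}_k$ algebras of subsets of $\Omega$. Then $\{A_1\cap\dots\cap A_k: A_i\in\mathcal{A}_i\text{ for every } i\in[k]\}$ is a $k$-semiring on $\Omega$. (b) Let $d,k_1,\dots,k_d$ be positive integers and $k=\sum_{i=1}^d k_i$. Let $\Omega_1,\dots,\Omega_d$ be nonempty sets and for each $i\in[d]$ let $\mathcal{S}_i$ be a $k_i$-semiring on $\Omega_i$. Then $\{S_1\times\dots\times S_d: S_i\in\mathcal{S}_i\text{ for every } i\in[d]\}$ is a $k$-semiring on $\Omega_1\times\dots\times\Omega_d$.
   Context: $[n]=\{1,\dots,n\}$. A collection $\mathcal{S}$ of subsets of a nonempty set $\Omega$ is a $k$-semiring on $\Omega$ if: (P1) $\emptyset,\Omega\in\mathcal{S}$; (P2) $S\cap T\in\mathcal{S}$ for all $S,T\in\mathcal{S}$; (P3) for all $S,T\in\mathcal{S}$ there exist $\ell\in[k]$ and pairwise disjoint $R_1,\dots,R_\ell\in\mathcal{S}$ with $S\setminus T=R_1\cup\dots\cup R_\ell$. *)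

From mathcomp Require Import all_boot.
From mathcomp Require Import boolp classical_sets.
Set Implicit Arguments. Unset Strict Implicit. Unset Printing Implicit Defensive.
Local Open Scope classical_set_scope.

(* The ground set Omega is the whole type T (setT). *)

Definition algebra_of_sets (T : Type) (A : set (set T)) : Prop :=
  [/\ A setT,
      (forall X, A X -> A (~` X)) &
      (forall X Y, A X -> A Y -> A (X `|` Y))].

Definition ksemiring (T : Type) (k : nat) (S : set (set T)) : Prop :=
  [/\ S set0, S setT,
      (forall A B, S A -> S B -> S (A `&` B)) &
      (forall A B, S A -> S B ->
         exists l : nat, (1 <= l <= k)%N /\
         exists R : nat -> set T,
           (forall i, (i < l)%N -> S (R i)) /\
           (forall i j, (i < l)%N -> (j < l)%N -> i <> j -> R i `&` R j = set0) /\
           A `\` B = \bigcup_(i in [set i | (i < l)%N]) R i)].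

From mathcomp Require Import all_boot zify.
From mathcomp Require Import boolp classical_sets.
Local Open Scope classical_set_scope.

(* For (b), a difference of boxes [prod A_i \ prod B_i] is the disjoint union,
   over j < d, of the boxes with sides [A_i `&` B_i] for i < j, [A_j `\` B_j]
   at j and [A_i] for i > j.  Splitting [A_j `\` B_j] into at most [k_j]
   disjoint members of [S_j] splits the j-th box into at most [k_j] boxes of
   the family, so at most [sum k_j] pieces are needed overall.  Part (a) is the
   case of 1-semirings (every algebra is one), pulled back along the diagonal
   [x |-> (x, ..., x)]: [\bigcap A_i] is the preimage of the box [prod A_i],
   and preimages of k-semirings are k-semirings. *)

Section Decomposition.
Context {T : Type}.
Implicit Types (S : set (set T)) (X Y : set T).

Definition finite_partition S X (l : nat) (R : nat -> set T) : Prop :=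
  (forall i, (i < l)%N -> S (R i)) /\
  (forall i j, (i < l)%N -> (j < l)%N -> i <> j -> R i `&` R j = set0) /\
  X = \bigcup_(i < l) R i.

Definition decomposable S (m M : nat) X : Prop :=
  exists l, (m <= l <= M)%N /\ exists R, finite_partition S X l R.

Lemma ksemiring_decomposable {k S} :
  ksemiring k S -> forall A B, S A -> S B -> decomposable S 1 k (A `\` B).
Proof. by case. Qed.

Lemma decomposableW {S m m' M M' X} :
  (m' <= m)%N -> (M <= M')%N -> decomposable S m M X -> decomposable S m' M' X.
Proof.
move=> mm' MM' [l [/andP[ml lM] RP]]; exists l; split=> //.
by apply/andP; split; [exact: leq_trans mm' ml | exact: leq_trans lM MM'].
Qed.

Lemma decomposable_set0 S : decomposable S 0 0 set0.
Proof.
exists 0; split=> //; exists (fun _ => set0); split=> //; split=> //.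
by rewrite II0 bigcup_set0.
Qed.

Lemma decomposableU S m1 M1 m2 M2 X Y : X `&` Y = set0 ->
  decomposable S m1 M1 X -> decomposable S m2 M2 Y ->
  decomposable S (m1 + m2) (M1 + M2) (X `|` Y).
Proof.
move=> XY0 [l1 [/andP[ml1 l1M] [R1 [SR1 [R1D EX]]]]].
move=> [l2 [/andP[ml2 l2M] [R2 [SR2 [R2D EY]]]]].
exists (l1 + l2); split; first by apply/andP; split; apply: leq_add.
exists (fun i => if (i < l1)%N then R1 i else R2 (i - l1)); split; [|split].
- by move=> i il; case: ifP => il1; [apply: SR1 | apply: SR2; lia].
- have cross i j : (i < l1)%N -> (j < l2)%N -> R1 i `&` R2 j = set0.
    move=> il jl; rewrite -subset0 -XY0 EX EY => x [R1x R2x].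
    by split; [exists i | exists j].
  move=> i j il jl ij; case: ifP => il1; case: ifP => jl1.
  + exact: R1D.
  + by apply: cross; lia.
  + by rewrite setIC; apply: cross; lia.
  + by apply: R2D; lia.
- rewrite EX EY; apply/seteqP; split=> x.
    case=> [[i /= il R1x] | [i /= il R2x]].
      by exists i => /=; [lia | rewrite il].
    by exists (l1 + i) => /=; [lia | rewrite ltnNge leq_addr /= addKn].
  case=> i /= il; case: ifP => il1 Rx; [left; exists i | right; exists (i - l1)] => //=.
  lia.
Qed.

Lemma decomposable_bigcup S n (c : nat -> nat) (Y : nat -> set T) :
  (forall i j, (i < n)%N -> (j < n)%N -> i <> j -> Y i `&` Y j = set0) ->
  (forall j, (j < n)%N -> decomposable S 1 (c j) (Y j)) ->
  decomposable S n (\sum_(j < n) c j) (\bigcup_(j < n) Y j).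
Proof.
elim: n => [|n IHn] YD YP.
  by rewrite II0 bigcup_set0 big_ord0; apply: decomposable_set0.
rewrite IIS bigcup_setU bigcup_set1 big_ord_recr -[X in decomposable _ X]addn1 /=.
apply: decomposableU; last exact: YP.
- rewrite -subset0 => x [[j jn Yjx] Ynx].
  have jn' : (j < n)%N := jn.
  by rewrite -(YD j n); [split | lia ..].
- apply: IHn => [i j il jl|j jl]; [apply: YD | apply: YP]; lia.
Qed.

End Decomposition.

Lemma decomposable_preimage {T U : Type} (f : T -> U) {S : set (set U)} {m M X} :
  decomposable S m M X ->
  decomposable [set f @^-1` Y | Y in S] m M (f @^-1` X).
Proof.
case=> l [lmM [R [SR [RD ->]]]]; exists l; split=> //.
exists (fun i => f @^-1` R i); split; [|split].
- by move=> i il; exists (R i); [apply: SR|].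
- by move=> i j il jl ij; rewrite -preimage_setI RD // preimage_set0.
- by rewrite preimage_bigcup.
Qed.

Lemma ksemiring_preimage (T U : Type) (f : T -> U) k (S : set (set U)) :
  ksemiring k S -> ksemiring k [set f @^-1` Y | Y in S].
Proof.
case=> S0 ST SI SD; split.
- by exists set0; rewrite ?preimage_set0.
- by exists setT.
- by move=> _ _ [X SX <-] [Y SY <-]; exists (X `&` Y); [apply: SI|].
- move=> _ _ [X SX <-] [Y SY <-].
  exact (decomposable_preimage f (SD X Y SX SY)).
Qed.

Lemma algebra_ksemiring1 {T : Type} {A : set (set T)} :
  algebra_of_sets A -> ksemiring 1 A.
Proof.
case=> AT AC AU.
have AI X Y : A X -> A Y -> A (X `&` Y).
  by move=> AX AY; rewrite -[X `&` Y]setCK setCI; apply/AC/AU; apply: AC.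
split=> //; first by rewrite -setCT; apply: AC.
move=> X Y AX AY; exists 1; split=> //; exists (fun=> X `\` Y); split; [|split].
- by move=> i _; apply: AI => //; apply: AC.
- by move=> [|i] [|j].
- by rewrite II1 bigcup_set1.
Qed.

Section Boxes.
Context {I : Type} {Omega : I -> Type}.
Implicit Types (C D : forall i, set (Omega i)).

Definition box C : set (forall i, Omega i) := [set x | forall i, C i (x i)].

Definition boxes (S : forall i, set (set (Omega i))) : set (set (forall i, Omega i)) :=
  [set X | exists C, (forall i, S i (C i)) /\ X = box C].

Lemma boxI C D : box C `&` box D = box (fun i => C i `&` D i).
Proof.
apply/seteqP; split=> x; first by case=> Cx Dx i; split.
by move=> CDx; split=> i; case: (CDx i).
Qed.

Lemma box_set0 C (i : I) : C i = set0 -> box C = set0.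
Proof. by move=> Ci0; rewrite -subset0 => x /(_ i); rewrite Ci0. Qed.

End Boxes.

Lemma diag_preimage_box (I T : Type) (C : I -> set T) :
  (fun x (_ : I) => x) @^-1` box C = \bigcap_(i in setT) C i.
Proof. by apply/seteqP; split=> x Cx i; [move=> _|]; apply: Cx. Qed.

Lemma decomposable_box {I : eqType} {Omega : I -> Type}
    {S : forall i, set (set (Omega i))} {C : forall i, set (Omega i)} (j : I) {m M} :
  (forall i, i != j -> S i (C i)) -> decomposable (S j) m M (C j) ->
  decomposable (boxes S) m M (box C).
Proof.
move=> SC [l [lmM [R [SR [RD Cj]]]]]; exists l; split=> //.
exists (fun n => box (dfwith C (R n))); split; [|split].
- move=> n nl; exists (dfwith C (R n)); split=> // i.
  by case: dfwithP => [|i' ji]; [apply: SR | apply: SC; rewrite eq_sym].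
- move=> n n' nl nl' nn'; rewrite -subset0 => x [/(_ j) + /(_ j)].
  rewrite !dfwith_in => Rx Rx'.
  by have [] : set0 (x j) by rewrite -(RD n n' nl nl' nn'); split.
- apply/seteqP; split=> x.
    move=> Cx; have := Cx j; rewrite Cj => -[n nl Rx]; exists n => // i.
    by case: dfwithP => // i' ji; apply: Cx.
  case=> n nl Rx i; have := Rx i; case: dfwithP => // Rjx.
  by rewrite Cj; exists n.
Qed.

Section BoxDifference.
Context {d : nat} {Omega : 'I_d -> Type} (A B : forall i, set (Omega i)).

Definition boxD_piece (j : nat) (i : 'I_d) : set (Omega i) :=
  if (i < j)%N then A i `&` B i else if i == j :> nat then A i `\` B i else A i.

Lemma boxD_piece_sub j i : boxD_piece j i `<=` A i.
Proof. by rewrite /boxD_piece; do 2?case: ifP => _ //; move=> x []. Qed.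

Lemma boxD_pieces : box A `\` box B = \bigcup_(j < d) box (boxD_piece j).
Proof.
apply/seteqP; split=> x.
- case=> Ax /existsNP[i0 nBx0].
  pose nB i := `[< ~ B i (x i) >].
  case: (arg_minnP val (asboolT nBx0 : nB i0)) => j /asboolP nBxj jmin.
  exists j => //= i; rewrite /boxD_piece; case: ltnP => [ij|ji].
    split=> //; apply: contrapT => nBxi.
    by have := jmin i (asboolT nBxi); rewrite leqNgt ij.
  by case: eqP => [/val_inj -> //|_]; apply: Ax.
- case=> j jd /= pieces; split=> [i|Bx]; first exact: boxD_piece_sub (pieces i).
  have := pieces (Ordinal jd); rewrite /boxD_piece /= ltnn eqxx.
  by case=> _; apply.
Qed.

Lemma boxD_pieces_disjoint i j : (i < d)%N -> (i < j)%N ->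
  box (boxD_piece i) `&` box (boxD_piece j) = set0.
Proof.
move=> id ij; rewrite -subset0 => x [/(_ (Ordinal id)) + /(_ (Ordinal id))].
by rewrite /boxD_piece /= ltnn eqxx ij => -[_ nBx] [].
Qed.

End BoxDifference.

Lemma ksemiring_boxes {d} {ks : 'I_d -> nat} {Omega : 'I_d -> Type}
    {S : forall i, set (set (Omega i))} :
  (0 < d)%N -> (forall i, ksemiring (ks i) (S i)) ->
  ksemiring (\sum_(i < d) ks i) (boxes S).
Proof.
move=> d0 kS.
have SI i X Y : S i X -> S i Y -> S i (X `&` Y) by case: (kS i) => _ _ + _; apply.
split.
- exists (fun=> set0); split=> [i|]; first by case: (kS i).
  by rewrite (box_set0 _ (Ordinal d0)).
- by exists (fun=> setT); split=> [i|]; [case: (kS i) | apply/seteqP].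
- move=> _ _ [A [SA ->]] [B [SB ->]].
  by exists (fun i => A i `&` B i); split=> [i|]; [apply: SI | rewrite boxI].
move=> _ _ [A [SA ->]] [B [SB ->]]; rewrite boxD_pieces.
(* [decomposable_bigcup] indexes pieces by nat, so extend [ks] by 0. *)
pose c j := oapp ks 0 (insub j : option 'I_d).
have cE (i : 'I_d) : c i = ks i by rewrite /c valK.
rewrite (eq_bigr (c \o val)) => [|i _]; last by rewrite /= cE.
apply: (decomposableW d0 (leqnn _)).
apply: decomposable_bigcup => [i j id jd ij|j jd].
  case: (ltngtP i j) => [lt_ij|lt_ji|//]; first exact: boxD_pieces_disjoint.
  by rewrite setIC; apply: boxD_pieces_disjoint.
rewrite -[j]/(val (Ordinal jd)) cE.
apply: (decomposable_box (Ordinal jd)) => [i ij|].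
  rewrite /boxD_piece; case: ifP => _; first exact: SI.
  by case: eqP => [/val_inj/eqP|_]; [rewrite (negPf ij) | apply: SA].
rewrite /boxD_piece /= ltnn eqxx.
exact (ksemiring_decomposable (kS _) _ _ (SA _) (SB _)).
Qed.

Theorem corollary2p4 :
  (* (a) *)
  (forall (T : Type) (k : nat) (A : 'I_k -> set (set T)),
     inhabited T -> (0 < k)%N ->
     (forall i, algebra_of_sets (A i)) ->
     ksemiring k
       [set X | exists Ai : 'I_k -> set T,
                  (forall i, A i (Ai i)) /\ X = \bigcap_(i in setT) Ai i])
  /\
  (* (b) *)
  (forall (d : nat) (ks : 'I_d -> nat) (Omega : 'I_d -> Type)
          (S : forall i, set (set (Omega i))),
     (0 < d)%N -> (forall i, 0 < ks i)%N ->
     (forall i, inhabited (Omega i)) ->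
     (forall i, ksemiring (ks i) (S i)) ->
     ksemiring (\sum_(i < d) ks i)%N
       [set X | exists Si : forall i, set (Omega i),
                  (forall i, S i (Si i)) /\
                  X = [set x : forall i, Omega i | forall i, Si i (x i)]]).
Proof.
split; last by move=> d ks Omega S d0 _ _ kS; apply: ksemiring_boxes.
move=> T k A _ k0 Aalg.
have -> : [set X | exists Ai : 'I_k -> set T,
                     (forall i, A i (Ai i)) /\ X = \bigcap_(i in setT) Ai i] =
          [set (fun x (_ : 'I_k) => x) @^-1` Y | Y in boxes A].
  apply/seteqP; split=> X.
    by case=> C [AC ->]; exists (box C); [exists C | apply: diag_preimage_box].
  by case=> _ [C [AC ->]] <-; exists C; rewrite diag_preimage_box.
apply: ksemiring_preimage.
have := ksemiring_boxes (ks := fun=> 1) k0 (fun i => algebra_ksemiring1 (Aalg i)).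
by rewrite sum_nat_const card_ord muln1.
Qed.
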